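(* In the setting of the context, let $k\ge1$, $a,b\ge0$ be integers with $a+b<k$. Then: (0) $\mathbf K_{k,a,b}(Z,Z')=\frac{n}{k-a-b}\big(\mathbf G_{k,a,b}(Z)-\mathbf G_{k,a,b}(Z')\big)$; (1) $\mathbf K_{k,a,b}(z',z)=-\mathbf K_{k,a,b}(z,z')$ identically; (2) $\mathbb E[\mathbf K_{k,a,b}(Z,Z')\mid Z]=\mathbf G_{k,a,b}(Z)$; (3) $(\mathbf D_1(Z)-\mathbf D_1(Z'))\mathbf K_{k,a,b}(Z,Z')=0$ and $\mathbf K_{k,a,b}(Z,Z')(\mathbf D_2(Z)-\mathbf D_2(Z'))=0$.
   Context: Let $Z=(Z_1,\dots,Z_n)$ be independent real random variables with finite moments of all orders; for $i\in[n]$, $\tilde Z_i$ is an independent copy of $Z_i$, $Z^{(i)}=(Z_1,\dots,Z_{i-1},\tilde Z_i,Z_{i+1},\dots,Z_n)$, and $Z'=Z^{(i)}$ for $i$ uniform in $[n]$ independent of everything else. Multi-index notation: for $\alpha,\beta\in\mathbb N^n$, sums and products are entrywise, $Z^\alpha=\prod_iZ_i^{\alpha_i}$, $|\alpha|_0$ is the number of nonzero entries, $|\alpha|_1=\sum_i\alpha_i$, $\alpha\le\beta$ is entrywise, $\alpha\unlhd\beta$ means $\alpha_i\in\{0,\beta_i\}$ for all $i$, and for $\gamma\in\{0,1\}^n$, $1-\gamma$ flips all bits. Polynomials are formal polynomials in $Z_1,\dots,Z_n$. $\nabla_\alpha(Z^\beta)=Z^{\beta-\alpha}$ if $\alpha\unlhd\beta$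 and $0$ otherwise (extended linearly, entrywise to matrices). For $\alpha\ne0$, $\chi_\alpha=\prod_{i:\alpha_i>0}(Z_i^{\alpha_i}-\mathbb E[Z_i^{\alpha_i}])$; every polynomial $f$ of degree $\le d_p$ is uniquely $c+\sum_{\alpha\ne0}\hat f(\alpha)\chi_\alpha$. Let $\mathcal I,\mathcal J$ be finite sets and $\mathbf F$ an $\mathcal I\times\mathcal J$ matrix with polynomial entries of total degree $\le d_p$; $\mathbf X=\mathbf F-\mathbb E\mathbf F=\sum_{\alpha\ne0}\hat{\mathbf X}(\alpha)\chi_\alpha$ and $\mathbf X_k=\sum_{|\alpha|_0=k}\hat{\mathbf X}(\alpha)\chi_\alpha$. $\mathcal K$ is the set of pairs $(\alpha,\gamma)$, $\alpha\in\mathbb N^n$, $|\alpha|_1\le d_p$, $\gamma\in\{0,1\}^n$, $\gamma\le\alpha$. $\mathbf D_1$ (resp. $\mathbf D_2$) is diagonal, indexed by $\mathcal I\times\mathcal K$ (resp. $\mathcal J\times\mathcal K$), with $(I,\alpha,\gamma)$ entry $\sqrt{\mathbb E[Z^{2\alpha\cdot(1-\gamma)}]}\,Z^{\alpha\cdot\gamma}$. $\mathbf G_{k,a,b}$ has rows $\mathcal I\times\mathcal K$, columns $\mathcal J\times\mathcal K$, and $[(I,\alpha_1,\gamma_1),(J,\alpha_2,\gamma_2)]$ entry $\nabla_{\alpha_1+\alpha_2}\mathbf X_k[I,J]$ if $|\alpha_1|_0=a,|\alpha_2|_0=b,\alpha_1\cdot\alpha_2=0$, and $0$ otherwise. For a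 mean-zero polynomial $f=\sum_{\alpha\ne0}\hat f(\alpha)\chi_\alpha$ put $\mathcal L^{-1}(f)=\sum_{\alpha\neq0}\frac{n}{|\alpha|_0}\hat f(\alpha)\chi_\alpha$ (applied entrywise), and for $a+b<k$ define the inner kernel $\mathbf K_{k,a,b}(z,z')=\mathcal L^{-1}(\mathbf G_{k,a,b})(z)-\mathcal L^{-1}(\mathbf G_{k,a,b})(z')$. *)

From HB Require Import structures.
From mathcomp Require Import all_boot all_order all_algebra.
From mathcomp Require Import mpoly.
From mathcomp Require Import boolp classical_sets reals ereal measure.
From mathcomp Require Import lebesgue_measure lebesgue_integral probability.
Set Implicit Arguments. Unset Strict Implicit. Unset Printing Implicit Defensive.
Import Order.TTheory GRing.Theory Num.Theory.
Local Open Scope ring_scope.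

Definition fmat (T1 T2 : finType) (V : Type) := T1 -> T2 -> V.
Definition fmmul (V : pzRingType) (T1 T2 T3 : finType)
  (A : fmat T1 T2 V) (B : fmat T2 T3 V) : fmat T1 T3 V :=
  fun x z => \sum_(y : T2) A x y * B y z.
Definition fmsub (V : pzRingType) (T1 T2 : finType) (A B : fmat T1 T2 V)
  : fmat T1 T2 V := fun x y => A x y - B x y.
Definition fmzero (V : pzRingType) (T1 T2 : finType) : fmat T1 T2 V :=
  fun _ _ => 0.
Definition fdiag (V : pzRingType) (T : finType) (d : T -> V) : fmat T T V :=
  fun x y => if x == y then d x else 0.

Section Setting.
Variables (R : realType) (n : nat).

Definition moment (mu : probability R R) (p : nat) : R :=
  fine (\int[mu]_t ((t ^+ p)%:E))%E.

Definition supp0 (al : 'X_{1..n}) : {set 'I_n} := [set i | al i != 0%N].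
Definition norm0 (al : 'X_{1..n}) : nat := #|supp0 al|.

Variable mu : 'I_n -> probability R R.

(* E[Z^beta] for independent Z_1..Z_n *)
Definition Emono (be : 'X_{1..n}) : R := \prod_(i < n) moment (mu i) (be i).
Definition Epoly (f : {mpoly R[n]}) : R := \sum_(m <- msupp f) f@_m * Emono m.

Definition chi (al : 'X_{1..n}) : {mpoly R[n]} :=
  \prod_(i < n | al i != 0%N) ('X_i ^+ al i - (moment (mu i) (al i))%:MP).

Variable dp : nat.

(* chaos coefficients: the (unique, for deg f <= dp) family h over the
   multi-indices with |alpha|_1 <= dp such that f = sum_alpha h(alpha) chi_alpha;
   h(0) is the constant c and h(alpha) = hat f(alpha) for alpha <> 0. *)
Definition chaos (f : {mpoly R[n]}) : {ffun 'X_{1..n < dp.+1} -> R} :=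
  xget [ffun=> 0] (fun h : {ffun 'X_{1..n < dp.+1} -> R} =>
    f = \sum_(al : 'X_{1..n < dp.+1}) h al *: chi al).

Definition Linv (f : {mpoly R[n]}) : {mpoly R[n]} :=
  \sum_(al : 'X_{1..n < dp.+1} | bmnm al != mnm0)
     ((n%:R / (norm0 al)%:R) * chaos f al) *: chi al.

Definition unle (al be : 'X_{1..n}) : bool :=
  [forall i, (al i == 0%N) || (al i == be i)].

Definition nabla (al : 'X_{1..n}) (f : {mpoly R[n]}) : {mpoly R[n]} :=
  \sum_(m <- msupp f) f@_m *: (if unle al m then 'X_[mnm_sub m al] else 0).

(* the index set K : pairs (alpha, gamma), |alpha|_1 <= dp, gamma in {0,1}^n
   (encoded as the set of its 1-coordinates), gamma <= alpha *)
Definition Kidx := {x : 'X_{1..n < dp.+1} * {set 'I_n} | x.2 \subset supp0 x.1}.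
Definition Kal (x : Kidx) : 'X_{1..n} := bmnm (sval x).1.
Definition Kga (x : Kidx) : {set 'I_n} := (sval x).2.

Variables (I J : finType) (F : I -> J -> {mpoly R[n]}).

Definition Xmat (i : I) (j : J) : {mpoly R[n]} := F i j - (Epoly (F i j))%:MP.
Definition Xk (k : nat) (i : I) (j : J) : {mpoly R[n]} :=
  \sum_(al : 'X_{1..n < dp.+1} | norm0 al == k) chaos (Xmat i j) al *: chi al.

Definition Gmat (k a b : nat) : fmat (I * Kidx)%type (J * Kidx)%type {mpoly R[n]} :=
  fun r c =>
    let a1 := Kal r.2 in let a2 := Kal c.2 in
    if [&& norm0 a1 == a, norm0 a2 == b & [forall i, a1 i * a2 i == 0%N]]
    then nabla (mnm_add a1 a2) (Xk k r.1 c.1) else 0.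

Definition Dent (T : finType) (z : 'I_n -> R) (r : (T * Kidx)%type) : R :=
  let al := Kal r.2 in let ga := Kga r.2 in
  Num.sqrt (Emono [multinom (if i \in ga then 0 else 2 * al i)%N | i < n])
  * \prod_(i < n) z i ^+ (if i \in ga then al i else 0%N).
Definition D1 (z : 'I_n -> R) : fmat (I * Kidx)%type (I * Kidx)%type R := fdiag (Dent z).
Definition D2 (z : 'I_n -> R) : fmat (J * Kidx)%type (J * Kidx)%type R := fdiag (Dent z).

Definition Kmat (k a b : nat) (z z' : 'I_n -> R) : fmat (I * Kidx)%type (J * Kidx)%type R :=
  fun r c => (Linv (Gmat k a b r c)).@[z] - (Linv (Gmat k a b r c)).@[z'].

Definition evalm (T1 T2 : finType) (M : fmat T1 T2 {mpoly R[n]}) (z : 'I_n -> R)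
  : fmat T1 T2 R := fun x y => (M x y).@[z].

Definition upd (z : 'I_n -> R) (i : 'I_n) (t : R) : 'I_n -> R :=
  fun j => if j == i then t else z j.

(* E[h(Z, Z') | Z = z], with Z' = Z^{(i)}, i uniform in [n], tilde Z_i ~ mu i
   independent of everything else *)
Definition condexpZ (h : ('I_n -> R) -> R) (z : 'I_n -> R) : R :=
  (n%:R)^-1 * \sum_(i < n) fine (\int[mu i]_t ((h (upd z i t))%:E))%E.

End Setting.

From HB Require Import structures.
From mathcomp Require Import all_boot all_order all_algebra.
From mathcomp Require Import mpoly ssrcomplements zify ring.
From mathcomp Require Import boolp classical_sets reals ereal measure.
From mathcomp Require Import lebesgue_measure lebesgue_integral probability.
Set Implicit Arguments. Unset Strict Implicit. Unset Printing Implicit Defensive.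
Import Order.TTheory GRing.Theory Num.Theory.
Local Open Scope ring_scope.

(* The chi_alpha are triangular with respect to the monomials (the coefficient
   of Z^beta in chi_alpha vanishes unless beta <= alpha entrywise, and is 1 at
   beta = alpha), hence free, so chaos coefficients are the coefficients of any
   expansion in the chi_alpha.  Since nabla_beta chi_alpha = chi_(alpha - beta)
   when beta <| alpha and 0 otherwise, every entry of G_{k,a,b} at
   (alpha_1, alpha_2) is a combination of chi_gamma with |gamma|_0 = k - a - b
   and gamma vanishing on the support of alpha_1 + alpha_2.  On such a
   combination f, L^-1 is multiplication by n/(k-a-b), which gives (0) and (1);
   resampling coordinate i averages chi_gamma to 0 if gamma_i <> 0 and leaves
   it unchanged otherwise, so E[f(Z) - f(Z') | Z] = (k-a-b)/n f(Z), which gives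
   (2); finally the (alpha, gamma) entries of D_1 and D_2 only depend on the
   coordinates in gamma, included in the support of alpha, on which the
   corresponding entries of G do not depend, which gives (3). *)

Section Support.
Variable n : nat.
Implicit Types (be g : 'X_{1..n}).

Lemma norm0_mnm0 : norm0 (0%MM : 'X_{1..n}) = 0%N.
Proof. by apply/eqP; rewrite cards_eq0; apply/eqP/setP => i; rewrite !inE mnm0E. Qed.

Lemma supp0_sub be g : unle be g -> supp0 (mnm_sub g be) = supp0 g :\: supp0 be.
Proof.
move=> /forallP le_be; apply/setP => i; rewrite !inE mnmBE.
by case/orP: (le_be i) => /eqP ->; rewrite ?subn0 ?subnn ?eqxx ?andbT ?andNb.
Qed.

Lemma norm0_sub be g : unle be g -> norm0 (mnm_sub g be) = (norm0 g - norm0 be)%N.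
Proof.
move=> le_be; have sub : supp0 be \subset supp0 g.
  apply/fintype.subsetP => i; rewrite !inE.
  by move/forallP: le_be => /(_ i) /orP [/eqP ->|/eqP ->].
by rewrite /norm0 supp0_sub // cardsD (finset.setIidPr sub).
Qed.

Lemma supp0_add (g1 g2 : 'X_{1..n}) : supp0 (mnm_add g1 g2) = supp0 g1 :|: supp0 g2.
Proof. by apply/setP => i; rewrite !inE mnmDE addn_eq0 negb_and. Qed.

Lemma norm0_add (g1 g2 : 'X_{1..n}) : [forall i, g1 i * g2 i == 0]%N ->
  norm0 (mnm_add g1 g2) = (norm0 g1 + norm0 g2)%N.
Proof.
move=> /forallP disj; rewrite /norm0 supp0_add cardsU.
rewrite (_ : _ :&: _ = finset.set0) ?cards0 ?subn0 //; apply/setP => i; rewrite !inE.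
by move: (disj i); rewrite muln_eq0 => /orP [] /eqP ->; rewrite ?eqxx ?andbF.
Qed.

End Support.

Section ChaosBasis.
Variables (R : realType) (n : nat) (mu : 'I_n -> probability R R).
Implicit Types (g m : 'X_{1..n}) (S : {set 'I_n}).

Definition mnm_restr g S : 'X_{1..n} :=
  [multinom if i \in S then g i else 0%N | i < n].

Definition chi_cst g i : R := if g i == 0%N then 0 else - moment (mu i) (g i).

Definition chi_coef g S : R := \prod_i (if i \in S then 1 else chi_cst g i).

Lemma chi_expand g : chi mu g = \sum_S chi_coef g S *: 'X_[mnm_restr g S].
Proof.
have -> : chi mu g = \prod_i ('X_i ^+ g i + (chi_cst g i)%:MP).
  rewrite /chi big_mkcond; apply: eq_bigr => i _; rewrite /chi_cst.
  by case: eqP => [->|_]; rewrite ?expr0 ?mpolyC0 ?addr0 ?mpolyCN.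
rewrite bigA_distr; apply: eq_bigr => S _.
rewrite -mul_mpolyC rmorph_prod /= mpolyXE_id -big_split /=; apply: eq_bigr => i _.
by rewrite mnmE; case: ifP => _; rewrite ?mpolyC1 ?mulr1 ?expr0 ?mul1r // mulrC.
Qed.

Lemma mcoeff_chi g m :
  (chi mu g)@_m = \sum_S chi_coef g S * (mnm_restr g S == m)%:R.
Proof.
by rewrite chi_expand raddf_sum; apply: eq_bigr => S _; rewrite /= mcoeffZ mcoeffX.
Qed.

Lemma mcoeff_chi_diag g : (chi mu g)@_g = 1.
Proof.
have restrT : mnm_restr g [set: 'I_n]%SET = g.
  by apply/mnmP => i; rewrite mnmE inE.
rewrite mcoeff_chi (bigD1 [set: 'I_n]%SET) //= restrT eqxx mulr1.
rewrite /chi_coef big1 => [|i _]; last by rewrite inE.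
rewrite big1 ?addr0 // => S /eqP nST; case: eqP => [restrS|]; last by rewrite mulr0.
have [i iS] : exists i, i \notin S.
  by apply/existsP; apply: contra_notT nST => /existsPn iS; apply/setP => i;
     rewrite inE; apply/negPn/iS.
have gi : g i = 0%N by rewrite -restrS mnmE (negbTE iS).
by rewrite /chi_coef (bigD1 i) //= (negbTE iS) /chi_cst gi eqxx !mul0r.
Qed.

Lemma mcoeff_chi_le g m : (chi mu g)@_m != 0 -> (m <= g)%MM.
Proof.
rewrite mcoeff_chi => /eqP nz0; apply/mnm_lepP => i.
have [S _ /eqP <-] : exists2 S, true & mnm_restr g S == m.
  apply/exists_inP; apply: contra_notT nz0 => /exists_inPn noS.
  by rewrite big1 // => S _; rewrite (negbTE (noS S isT)) mulr0.
by rewrite mnmE; case: ifP.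
Qed.

Lemma chi_eval g (z : 'I_n -> R) :
  (chi mu g).@[z] = \prod_(j | g j != 0%N) (z j ^+ g j - moment (mu j) (g j)).
Proof.
rewrite /chi rmorph_prod; apply: eq_bigr => j _.
by rewrite /= mevalB mevalC rmorphXn /= mevalXU.
Qed.

Lemma chi_upd_notin g z i t : g i = 0%N -> (chi mu g).@[upd z i t] = (chi mu g).@[z].
Proof.
move=> gi; rewrite !chi_eval; apply: eq_bigr => j gj; rewrite /upd.
by case: eqP => // ji; move: gj; rewrite ji gi.
Qed.

Lemma chi_eval_upd g z i t : g i != 0%N ->
  (chi mu g).@[upd z i t] = (t ^+ g i - moment (mu i) (g i))
    * \prod_(j | (g j != 0%N) && (j != i)) (z j ^+ g j - moment (mu j) (g j)).
Proof.
move=> gi; rewrite chi_eval (bigD1 i) //= /upd eqxx; congr (_ * _).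
by apply: eq_bigr => j /andP [_ /negbTE ->].
Qed.

Variable dp : nat.
Local Notation B := 'X_{1..n < dp.+1}.

Lemma chi_sum_eq0 (h : B -> R) :
  \sum_(al : B) h al *: chi mu al = 0 -> forall al, h al = 0.
Proof.
move=> sum0 al0; apply/eqP; apply: contraT => h0.
(* For g maximal (degree-lexicographically) with h g <> 0, only chi_g contributes
   to the coefficient of 'X_[g]. *)
have [g hg maxg] := @arg_maxP _ _ B al0 (fun x => h x != 0) (fun x : B => bmnm x) h0.
move/(congr1 (mcoeff (bmnm g))): sum0; rewrite raddf_sum mcoeff0 (bigD1 g) //=.
rewrite mcoeffZ mcoeff_chi_diag mulr1 big1 ?addr0 => [hg0|x nxg].
  by rewrite hg0 eqxx in hg.
rewrite mcoeffZ; have [->|hx] := eqVneq (h x) 0; first by rewrite mul0r.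
have [->|/mcoeff_chi_le/lem_leo gx] := eqVneq (chi mu x)@_(bmnm g) 0.
  by rewrite mulr0.
have /= xg := maxg x hx.
by case/eqP: nxg; apply/val_inj/le_anti; rewrite gx xg.
Qed.

Lemma chaos_chi_sum (h : {ffun B -> R}) :
  chaos mu dp (\sum_(al : B) h al *: chi mu al) = h.
Proof.
rewrite /chaos; set f := \sum_(al : B) _; set h' := xget _ _.
have fE : f = \sum_(al : B) h' al *: chi mu al.
  apply: (@xgetPex _ [ffun=> 0]
           (fun h : {ffun B -> R} => f = \sum_(al : B) h al *: chi mu al)).
  by exists h.
apply/ffunP => al; apply/eqP; rewrite -subr_eq0; apply/eqP.
apply: (chi_sum_eq0 (h := fun al => h' al - h al)) al.
by under eq_bigr do rewrite scalerBl; rewrite sumrB -fE subrr.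
Qed.

Definition chaos_span (k : nat) S (f : {mpoly R[n]}) := exists h : {ffun B -> R},
  f = \sum_(al : B) h al *: chi mu al /\
  forall al, h al != 0 -> norm0 al = k /\ {in S, forall i, al i = 0%N}.

Section ChaosSpan.
Variables (k : nat) (S : {set 'I_n}).

Lemma chaos_span0 : chaos_span k S 0.
Proof.
exists [ffun=> 0]; split=> [|al]; last by rewrite ffunE eqxx.
by rewrite big1 // => al _; rewrite ffunE scale0r.
Qed.

Lemma chaos_spanD p q : chaos_span k S p -> chaos_span k S q -> chaos_span k S (p + q).
Proof.
move=> [h1 [-> H1]] [h2 [-> H2]]; exists [ffun al => h1 al + h2 al]; split.
  by rewrite -big_split; apply: eq_bigr => al _; rewrite ffunE scalerDl.
move=> al; rewrite ffunE; have [h10|] := eqVneq (h1 al) 0; last by move/H1.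
by rewrite h10 add0r => /H2.
Qed.

Lemma chaos_spanZ c p : chaos_span k S p -> chaos_span k S (c *: p).
Proof.
move=> [h [-> H]]; exists [ffun al => c * h al]; split.
  by rewrite scaler_sumr; apply: eq_bigr => al _; rewrite ffunE scalerA.
by move=> al; rewrite ffunE mulf_eq0 negb_or => /andP [_ /H].
Qed.

Lemma chaos_span_sum (T : Type) (r : seq T) (P : pred T) (f : T -> {mpoly R[n]}) :
  (forall x, P x -> chaos_span k S (f x)) -> chaos_span k S (\sum_(x <- r | P x) f x).
Proof.
move=> Hf; elim: r => [|x r IH]; first by rewrite big_nil; exact: chaos_span0.
by rewrite big_cons; case: ifP => Px //; apply: chaos_spanD (Hf x Px) IH.
Qed.

Lemma chaos_span_chi (al : B) :
  norm0 al = k -> {in S, forall i, al i = 0%N} -> chaos_span k S (chi mu al).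
Proof.
move=> Hk HS; exists [ffun x => (x == al)%:R]; split=> [|x].
  rewrite (bigD1 al) //= ffunE eqxx scale1r big1 ?addr0 // => x /negbTE nx.
  by rewrite ffunE nx scale0r.
by rewrite ffunE; have [-> _|_] := eqVneq x al; rewrite ?eqxx.
Qed.

Lemma Linv_chaos_span f : (0 < k)%N -> chaos_span k S f ->
  Linv mu dp f = (n%:R / k%:R) *: f.
Proof.
move=> k_gt0 [h [fE Hh]]; rewrite /Linv fE chaos_chi_sum scaler_sumr big_mkcond /=.
apply: eq_bigr => al _; have [->|/Hh [alk _]] := eqVneq (h al) 0.
  by rewrite mulr0 !scale0r scaler0; case: ifP.
have -> : bmnm al != 0%MM.
  by apply: contraTneq k_gt0 => al0; rewrite -alk al0 norm0_mnm0.
by rewrite alk scalerA.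
Qed.

Lemma meval_chi_sum (h : B -> R) (z : 'I_n -> R) :
  (\sum_(al : B) h al *: chi mu al).@[z] = \sum_(al : B) h al * (chi mu al).@[z].
Proof. by rewrite raddf_sum; apply: eq_bigr => al _; rewrite /= mevalZ. Qed.

Lemma chaos_span_upd f z i t : chaos_span k S f -> i \in S -> f.@[upd z i t] = f.@[z].
Proof.
move=> [h [-> Hh]] iS; rewrite !meval_chi_sum; apply: eq_bigr => al _.
have [->|/Hh [_ alS]] := eqVneq (h al) 0; first by rewrite !mul0r.
by rewrite chi_upd_notin // alS.
Qed.

End ChaosSpan.
End ChaosBasis.

Section Gradient.
Variables (R : realType) (n : nat).
Implicit Types (be g m : 'X_{1..n}) (S : {set 'I_n}) (p q : {mpoly R[n]}).

Lemma nablaX be m :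
  nabla be 'X_[m] = if unle be m then 'X_[mnm_sub m be] else 0 :> {mpoly R[n]}.
Proof. by rewrite /nabla msuppX big_seq1 mcoeffX eqxx scale1r. Qed.

Lemma nablaE be p N : (msize p <= N)%N ->
  nabla be p = \sum_(m : 'X_{1..n < N}) p@_m *: nabla be 'X_[m].
Proof.
move=> le_pN; rewrite [LHS]/nabla (big_mksub 'X_{1..n < N}) ?msupp_uniq //=; last first.
  by move=> m /msize_mdeg_lt /leq_trans; apply.
rewrite big_rmcond => [|m /memN_msupp_eq0 ->]; last by rewrite scale0r.
by apply: eq_bigr => m _; rewrite nablaX.
Qed.

Fact nabla_is_linear be : linear (@nabla R n be).
Proof.
move=> c p q; pose N := (msize p + msize q + msize (c *: p + q))%N.
rewrite !(nablaE be (N := N)); try by rewrite /N; lia.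
rewrite scaler_sumr -big_split; apply: eq_bigr => m _ /=.
by rewrite mcoeffD mcoeffZ scalerDl scalerA.
Qed.

HB.instance Definition _ be :=
  GRing.isLinear.Build R _ _ _ (@nabla R n be) (nabla_is_linear be).

Lemma unle_restr be g S : unle be (mnm_restr g S) -> unle be g.
Proof.
move=> /forallP le_be; apply/forallP => i; move: (le_be i); rewrite mnmE.
by case: (i \in S) => //; rewrite orbb => ->.
Qed.

Lemma nabla_chi_term (mu : 'I_n -> probability R R) be g S : unle be g ->
  chi_coef mu g S *: nabla be 'X_[mnm_restr g S]
  = chi_coef mu (mnm_sub g be) S *: 'X_[mnm_restr (mnm_sub g be) S].
Proof.
move=> /forallP le_be; rewrite nablaX.
(* Both sides vanish unless the support of be is contained in S. *)
have [/fintype.subsetP beS|/fintype.subsetPn [i]] := boolP (supp0 be \subset S).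
  have be0 i : i \notin S -> be i = 0%N.
    by move=> iS; apply/eqP; apply: contraNT iS => bei; apply: beS; rewrite inE.
  have -> : unle be (mnm_restr g S).
    apply/forallP => i; rewrite mnmE; case: ifP => [_|/negbT/be0 ->] //.
  congr (_ *: 'X_[_]).
    apply: eq_bigr => i _; case: ifP => // /negbT iS.
    by rewrite /chi_cst mnmBE be0 ?subn0.
  by apply/mnmP => i; rewrite !mnmE; case: ifP => // /negbT/be0 ->.
rewrite inE => bei iS.
have -> : unle be (mnm_restr g S) = false.
  by apply/negbTE/forallPn; exists i; rewrite mnmE (negbTE iS) (negbTE bei).
have -> : chi_coef mu (mnm_sub g be) S = 0.
  rewrite /chi_coef (bigD1 i) //= (negbTE iS) /chi_cst mnmBE.
  by move: (le_be i); rewrite (negbTE bei) => /eqP ->; rewrite subnn eqxx mul0r.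
by rewrite scaler0 scale0r.
Qed.

Lemma nabla_chi (mu : 'I_n -> probability R R) be g :
  nabla be (chi mu g) = if unle be g then chi mu (mnm_sub g be) else 0.
Proof.
rewrite chi_expand raddf_sum /=; case: ifP => [le_be|not_le].
  by rewrite chi_expand; apply: eq_bigr => S _; rewrite linearZ /= nabla_chi_term.
apply: big1 => S _; rewrite linearZ /= nablaX.
by case: ifP => [/unle_restr|_]; rewrite ?not_le ?scaler0.
Qed.

End Gradient.


Lemma Gmat_chaos_span (R : realType) (n : nat) (mu : 'I_n -> probability R R)
    (dp : nat) (I J : finType) (F : I -> J -> {mpoly R[n]}) (k a b : nat)
    (r : I * Kidx n dp) (c : J * Kidx n dp) :
  chaos_span mu dp (k - a - b) (supp0 (mnm_add (Kal r.2) (Kal c.2)))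
    (Gmat mu F k a b r c).
Proof.
rewrite /Gmat; case: ifP => [/and3P [/eqP na /eqP nb disj]|_]; last first.
  exact: chaos_span0.
rewrite /Xk raddf_sum /=; apply: chaos_span_sum => al /eqP nal.
rewrite linearZ /= nabla_chi; apply: chaos_spanZ.
case: ifP => le_be; last exact: chaos_span0.
set be := mnm_add _ _.
have deg_lt : (mdeg (mnm_sub al be) < dp.+1)%N.
  exact: leq_ltn_trans (mdegB _ _) (bmdeg al).
apply: (chaos_span_chi mu (al := BMultinom deg_lt)) => /=.
  by rewrite norm0_sub // norm0_add // nal na nb subnDA.
move=> i; rewrite inE mnmBE => bei.
by move/forallP: le_be => /(_ i); rewrite (negbTE bei) => /eqP ->; rewrite subnn.
Qed.

Lemma Rintegral_sum d (T : measurableType d) (R : realType)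
    (mu : {measure set T -> \bar R}) (D : set T) (I : Type) (s : seq I)
    (f : I -> T -> R) :
  measurable D -> (forall i, mu.-integrable D (EFin \o f i)) ->
  \int[mu]_(x in D) \sum_(i <- s) f i x = \sum_(i <- s) \int[mu]_(x in D) f i x.
Proof.
move=> mD intf; elim: s => [|i s IH].
  by under eq_Rintegral do rewrite big_nil; rewrite Rintegral_cst // mul0r big_nil.
rewrite big_cons -IH -RintegralD //; first by under eq_Rintegral do rewrite big_cons.
apply: (eq_integrable mD _ _ _ (integrable_sum mD s (P := xpredT) (fun i _ => intf i))).
by move=> x _; rewrite /= sumEFin.
Qed.

Lemma Rintegral_cst_prob d (T : measurableType d) (R : realType)
    (P : probability T R) (c : R) :
  \int[P]_x c = c.
Proof. by rewrite Rintegral_cst // (congr1 fine (probability_setT P)) mulr1. Qed.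

Section Resampling.
Variables (R : realType) (n : nat) (mu : 'I_n -> probability R R).
Hypothesis moment_integrable :
  forall i p, (mu i).-integrable setT (fun t : R => (t ^+ p)%:E).
Implicit Types (g : 'X_{1..n}) (z : 'I_n -> R).

Lemma integrable_centered_moment i p :
  (mu i).-integrable setT (EFin \o (fun t => t ^+ p - moment (mu i) p)).
Proof.
exact: integrableB _ (moment_integrable i p) (finite_measure_integrable_cst _ _ _).
Qed.

Lemma integrable_chi_upd g z i :
  (mu i).-integrable setT (EFin \o (fun t => (chi mu g).@[upd z i t])).
Proof.
have [gi|gi] := eqVneq (g i) 0%N.
  have := finite_measure_integrable_cst (mu i) (chi mu g).@[z] measurableT.
  by apply: eq_integrable => // t _; rewrite /= chi_upd_notin.
pose Q := \prod_(j | (g j != 0%N) && (j != i)) (z j ^+ g j - moment (mu j) (g j)).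
have := integrableZr measurableT Q (integrable_centered_moment i (g i)).
by apply: eq_integrable => // t _; rewrite /= chi_eval_upd.
Qed.

Lemma Rintegral_chi_upd g z i :
  \int[mu i]_t (chi mu g).@[upd z i t] = if g i == 0%N then (chi mu g).@[z] else 0.
Proof.
have [gi|gi] := eqVneq (g i) 0%N.
  under eq_Rintegral do rewrite chi_upd_notin //.
  by rewrite Rintegral_cst_prob.
rewrite (eq_Rintegral _ (fun t _ => @chi_eval_upd R n mu g z i t gi)).
rewrite RintegralZr ?RintegralB ?Rintegral_cst_prob ?subrr ?mul0r //.
- exact: moment_integrable.
- exact: finite_measure_integrable_cst.
- exact: integrable_centered_moment.
Qed.

Lemma Rintegral_chi_sum_increment dp (h : 'X_{1..n < dp.+1} -> R) z i (c : R) :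
  let f := \sum_al h al *: chi mu al in
  \int[mu i]_t (c * (f.@[z] - f.@[upd z i t]))
  = c * \sum_(al : 'X_{1..n < dp.+1})
          (if al i != 0%N then h al * (chi mu al).@[z] else 0).
Proof.
move=> f; have incrE t : c * (f.@[z] - f.@[upd z i t])
    = \sum_al c * h al * ((chi mu al).@[z] - (chi mu al).@[upd z i t]).
  by rewrite !meval_chi_sum -sumrB mulr_sumr; apply: eq_bigr => al _; ring.
have int_incr (al : 'X_{1..n < dp.+1}) : (mu i).-integrable setT
    (EFin \o (fun t => (chi mu al).@[z] - (chi mu al).@[upd z i t])).
  exact: integrableB _ (finite_measure_integrable_cst _ _ _)
    (integrable_chi_upd al z i).
under eq_Rintegral do rewrite incrE.
rewrite Rintegral_sum // => [|al]; last first.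
  exact: (eq_integrable _ _ _ _ (integrableZl _ (c * h al) (int_incr al))).
rewrite mulr_sumr; apply: eq_bigr => al _.
rewrite RintegralZl // RintegralB ?Rintegral_cst_prob ?Rintegral_chi_upd //.
- by case: eqP => _ /=; rewrite ?subrr ?subr0 ?mulr0 ?mulrA.
- exact: finite_measure_integrable_cst.
- exact: integrable_chi_upd.
Qed.

Lemma condexpZ_chaos_span dp k S f z (c : R) : chaos_span mu dp k S f ->
  condexpZ mu (fun z' => c * (f.@[z] - f.@[z'])) z = c * (k%:R / n%:R * f.@[z]).
Proof.
move=> [h [-> Hh]]; rewrite /condexpZ.
rewrite (eq_bigr _ (fun i _ => Rintegral_chi_sum_increment h z i c)).
rewrite -mulr_sumr exchange_big /=.
have count (al : 'X_{1..n < dp.+1}) :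
    \sum_i (if al i != 0%N then h al * (chi mu al).@[z] else 0)
    = h al * (chi mu al).@[z] *+ k.
  have [->|/Hh [<- _]] := eqVneq (h al) 0.
    by rewrite mul0r mul0rn big1 // => i _; rewrite if_same.
  rewrite -big_mkcond /= (eq_bigl (fun i => i \in supp0 al)) ?sumr_const //.
  by move=> i; rewrite inE.
under eq_bigr do rewrite count.
by rewrite sumrMnl meval_chi_sum -mulr_natr; ring.
Qed.

End Resampling.

Section DiagonalProducts.
Variables (V : pzRingType) (T1 T2 : finType).

Lemma fmmul_fdiag_subl (d d' : T1 -> V) (M : fmat T1 T2 V) x y :
  fmmul (fmsub (fdiag d) (fdiag d')) M x y = (d x - d' x) * M x y.
Proof.
rewrite /fmmul /fmsub /fdiag (bigD1 x) //= eqxx big1 ?addr0 // => x' /negbTE nx.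
by rewrite eq_sym nx subrr mul0r.
Qed.

Lemma fmmul_fdiag_subr (d d' : T2 -> V) (M : fmat T1 T2 V) x y :
  fmmul M (fmsub (fdiag d) (fdiag d')) x y = M x y * (d y - d' y).
Proof.
rewrite /fmmul /fmsub /fdiag (bigD1 y) //= eqxx big1 ?addr0 // => y' /negbTE ny.
by rewrite ny subrr mulr0.
Qed.

End DiagonalProducts.

Lemma Dent_upd (R : realType) (n : nat) (mu : 'I_n -> probability R R)
    (dp : nat) (T : finType) (z : 'I_n -> R) (i : 'I_n) (t : R) (x : T * Kidx n dp) :
  i \notin Kga x.2 -> Dent mu (upd z i t) x = Dent mu z x.
Proof.
move=> iga; rewrite /Dent; congr (_ * _); apply: eq_bigr => j _; rewrite /upd.
by case: eqP => // ->; rewrite (negbTE iga).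
Qed.

Lemma Kga_supp0 (n dp : nat) (x : Kidx n dp) : Kga x \subset supp0 (Kal x).
Proof. exact: svalP x. Qed.

Theorem mainTheorem11 (R : realType) (n : nat) (hn : (0 < n)%N)
  (mu : 'I_n -> probability R R)
  (Hmom : forall (i : 'I_n) (p : nat),
            (mu i).-integrable setT (fun t : R => (t ^+ p)%:E))
  (dp : nat) (I J : finType) (F : I -> J -> {mpoly R[n]})
  (HF : forall (i : I) (j : J), (msize (F i j) <= dp.+1)%N)
  (k a b : nat) (hk : (1 <= k)%N) (hab : (a + b < k)%N) :
  let G := Gmat mu (dp:=dp) F k a b in
  let K := Kmat mu (dp:=dp) F k a b in
  [/\ (* (0) *)
      (forall (z : 'I_n -> R) (i : 'I_n) (t : R) r c,
         K z (upd z i t) r c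
         = n%:R / (k - a - b)%N%:R
           * (evalm G z r c - evalm G (upd z i t) r c)),
      (* (1) *)
      (forall (z z' : 'I_n -> R) r c, K z' z r c = - K z z' r c),
      (* (2) *)
      (forall (z : 'I_n -> R) r c,
         condexpZ mu (fun z' => K z z' r c) z = evalm G z r c) &
      (* (3) *)
      (forall (z : 'I_n -> R) (i : 'I_n) (t : R),
         fmmul (fmsub (D1 mu (dp:=dp) (I:=I) z) (D1 mu (dp:=dp) (I:=I) (upd z i t))) (K z (upd z i t))
           = @fmzero _ _ _
         /\ fmmul (K z (upd z i t)) (fmsub (D2 mu (dp:=dp) (J:=J) z) (D2 mu (dp:=dp) (J:=J) (upd z i t)))
           = @fmzero _ _ _)].
Proof.
move=> G K; set m := (k - a - b)%N.
have m_gt0 : (0 < m)%N by rewrite /m -subnDA subn_gt0.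
have G_span (r : I * Kidx n dp) (c : J * Kidx n dp) :=
  Gmat_chaos_span mu F k a b r c.
have KE z z' r c : K z z' r c = n%:R / m%:R * (evalm G z r c - evalm G z' r c).
  by rewrite /K /Kmat (Linv_chaos_span m_gt0 (G_span r c)) !mevalZ mulrBr.
have K_upd z i t r c : i \in supp0 (mnm_add (Kal r.2) (Kal c.2)) ->
    K z (upd z i t) r c = 0.
  by move=> iS; rewrite KE /evalm (chaos_span_upd _ _ (G_span r c) iS) subrr mulr0.
split=> [z i t r c|z z' r c|z r c|z i t].
- exact: KE.
- by rewrite !KE -mulrN opprB.
- rewrite (funext (fun z' => KE z z' r c)) (condexpZ_chaos_span Hmom _ _ (G_span r c)).
  rewrite /evalm.
  by field; rewrite !pnatr_eq0 -!lt0n hn m_gt0.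
- split; apply/funext => r; apply/funext => c;
    rewrite /D1 /D2 ?fmmul_fdiag_subl ?fmmul_fdiag_subr /fmzero.
  + have [iga|/Dent_upd ->] := boolP (i \in Kga r.2); last by rewrite subrr mul0r.
    by rewrite K_upd ?mulr0 // supp0_add inE (fintype.subsetP (Kga_supp0 _) _ iga).
  + have [iga|/Dent_upd ->] := boolP (i \in Kga c.2); last by rewrite subrr mulr0.
    by rewrite K_upd ?mul0r // supp0_add inE (fintype.subsetP (Kga_supp0 _) _ iga) orbT.
Qed.
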